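(* Let $1 < p < \infty$ and let $\lambda, \mu, \nu, \alpha$ be real numbers with $\alpha + 1 < p(\mu + 1)$. Let $$\mathcal{H}_{\lambda,\mu,\nu}(a)(n) = \sum_{m=1}^{\infty} \frac{m^{\mu} n^{\nu}}{(m+n)^{\lambda}} a_m, \quad n \in \mathbb{N}.$$ Then $\mathcal{H}_{\lambda,\mu,\nu}$ is bounded from $l^p_\alpha$ to $l^\infty$ if and only if $$\lambda \geq \mu + \nu + 1 - \frac{\alpha+1}{p} \quad\text{and}\quad p(\mu + 1 - \lambda) < \alpha + 1.$$
   Context: $l^p_\alpha$ is the space of real sequences $a=\{a_m\}_{m\ge1}$ with $\|a\|_{p,\alpha} = \left(\sum_{m=1}^\infty m^\alpha |a_m|^p\right)^{1/p} < \infty$; $l^\infty$ is the space of real sequences with $\|a\|_\infty = \sup_{m} |a_m| < \infty$. Bounded means: for every $a \in l^p_\alpha$ the defining series converge, the image lies in $l^\infty$, and $\|\mathcal{H}_{\lambda,\mu,\nu} a\|_\infty \le C\|a\|_{p,\alpha}$ for a constant $C$ independent of $a$. *)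

From Stdlib Require Import Reals Lra.
From Coquelicot Require Import Coquelicot.
Open Scope R_scope.

(* |x|^q for real exponent q > 0, with |0|^q = 0 (Rpower 0 q would be 1). *)
Definition abspow (x q : R) : R :=
  if Req_EM_T x 0 then 0 else Rpower (Rabs x) q.

(* Sequences a = (a_m)_{m>=1} are encoded as a : nat -> R with a k = a_{k+1}. *)

Definition lpa_term (p alpha : R) (a : nat -> R) (k : nat) : R :=
  Rpower (INR (S k)) alpha * abspow (a k) p.

Definition in_lpa (p alpha : R) (a : nat -> R) : Prop :=
  ex_series (lpa_term p alpha a).

Definition lpa_norm (p alpha : R) (a : nat -> R) : R :=
  Rpower (Series (lpa_term p alpha a)) (/ p).

(* the m-th term (m = k+1) of H_{lam,mu,nu}(a)(n'), with n' = n+1 *)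
Definition H_term (lam mu nu : R) (a : nat -> R) (n k : nat) : R :=
  Rpower (INR (S k)) mu * Rpower (INR (S n)) nu
    / Rpower (INR (S k) + INR (S n)) lam * a k.

Definition H_op (lam mu nu : R) (a : nat -> R) (n : nat) : R :=
  Series (H_term lam mu nu a n).

(* H is bounded from l^p_alpha to l^infty: for every a in l^p_alpha all the
   defining series converge and sup_n |H a n| <= C ||a||_{p,alpha}, with C
   independent of a (this also gives H a in l^infty). *)
Definition H_bounded_lpa_linf (p alpha lam mu nu : R) : Prop :=
  exists C : R, forall a : nat -> R, in_lpa p alpha a ->
    forall n : nat, ex_series (H_term lam mu nu a n) /\
      Rabs (H_op lam mu nu a n) <= C * lpa_norm p alpha a.

From Stdlib Require Import Reals Lra Lia Bool.
From Coquelicot Require Import Coquelicot.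
Open Scope R_scope.

(* Sufficiency is Hoelder's inequality for the pairing of [m^(alpha/p) a_m], whose p-th powers
   sum to [||a||^p], with the kernel [m^(mu - alpha/p) n^nu / (m + n)^lam], whose q-th powers
   ([1/p + 1/q = 1]) have partial sums bounded uniformly in n.  Bounding [(m + n)^lam] below by
   [max(m, n)^lam] and comparing with integrals of powers, both the part [m <= n] and the part
   [m > n] are [O(n^e)] with [e = q (mu + nu + 1 - lam - (alpha + 1)/p) <= 0]; the first part
   needs [q (mu - alpha/p) > -1], i.e. [alpha + 1 < p (mu + 1)], and the second needs
   [q (mu - alpha/p - lam) < -1], i.e. [p (mu + 1 - lam) < alpha + 1].
   Necessity tests H on [a_m = m^(-(alpha+1)/p)] cut to a finite block, for which
   [m^alpha |a_m|^p = 1/m].  On [m <= N], if [p (mu + 1 - lam) >= alpha + 1] then [H a (1)]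
   dominates [sum 1/m = ||a||^p], which is incompatible with [H a (1) <= C ||a||] because the
   harmonic series diverges.  On the dyadic block [n < m <= 2n], [||a|| <= 1] while [H a (n)] is
   of order [n^(mu + nu + 1 - lam - (alpha+1)/p)], which is unbounded when lam is below the
   threshold. *)

Lemma exp_le_compat (x y : R) : x <= y -> exp x <= exp y.
Proof.
  intros [hlt|heq]; [left; exact (exp_increasing _ _ hlt)|right; now rewrite heq].
Qed.

Lemma exp_convex (t x y : R) : 0 <= t <= 1 ->
  exp (t * x + (1 - t) * y) <= t * exp x + (1 - t) * exp y.
Proof.
  intros ht. set (w := t * x + (1 - t) * y).
  assert (htangent : forall z, exp w * (1 + (z - w)) <= exp z).
  { intro z. replace z with (w + (z - w)) at 2 by ring. rewrite exp_plus.
    apply Rmult_le_compat_l; [left; apply exp_pos|apply exp_ineq1_le]. }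
  pose proof (htangent x). pose proof (htangent y). pose proof (exp_pos w).
  assert (t * (exp w * (1 + (x - w))) + (1 - t) * (exp w * (1 + (y - w))) = exp w)
    by (unfold w; ring).
  nra.
Qed.

Lemma Rpower_pos (x y : R) : 0 < Rpower x y.
Proof. apply exp_pos. Qed.

Lemma Rpower_1_base (y : R) : Rpower 1 y = 1.
Proof. unfold Rpower. rewrite ln_1, Rmult_0_r. apply exp_0. Qed.

Lemma Rpower_minus (x a b : R) : Rpower x (a - b) = Rpower x a / Rpower x b.
Proof. unfold Rminus, Rdiv. now rewrite Rpower_plus, Rpower_Ropp. Qed.

Lemma Rpower_ge_1 (x e : R) : 1 <= x -> 0 <= e -> 1 <= Rpower x e.
Proof. intros hx he. rewrite <- (Rpower_O x) at 1 by lra. now apply Rle_Rpower. Qed.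

Lemma Rpower_le_1 (x e : R) : 1 <= x -> e <= 0 -> Rpower x e <= 1.
Proof. intros hx he. rewrite <- (Rpower_O x) by lra. now apply Rle_Rpower. Qed.

Lemma INR_S_ge_1 (k : nat) : 1 <= INR (S k).
Proof. rewrite S_INR. pose proof (pos_INR k). lra. Qed.

Lemma INR_S_pred (k : nat) : INR (S (S k)) - 1 = INR (S k).
Proof. rewrite (S_INR (S k)). ring. Qed.

Lemma Rpower_comparable (a y kap c : R) : 0 < a -> 1 <= kap -> a <= y <= kap * a ->
  Rpower kap (- Rabs c) * Rpower a c <= Rpower y c.
Proof.
  intros ha hkap hy. unfold Rpower. rewrite <- exp_plus. apply exp_le_compat.
  assert (ln a <= ln y) by (apply ln_le; lra).
  assert (ln y <= ln kap + ln a) by (rewrite <- ln_mult by lra; apply ln_le; lra).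
  assert (0 <= ln kap) by (rewrite <- ln_1; apply ln_le; lra).
  destruct (Rle_dec 0 c).
  - rewrite Rabs_pos_eq by lra. nra.
  - rewrite Rabs_left by lra. nra.
Qed.

Lemma Rpower_unbounded (d M : R) : 0 < d -> exists Y, forall x, Y <= x -> M < Rpower x d.
Proof.
  intros hd. exists (Rpower (Rabs M + 1) (/ d)). intros x hx.
  assert (hY : Rpower (Rpower (Rabs M + 1) (/ d)) d = Rabs M + 1).
  { rewrite Rpower_mult, Rinv_l, Rpower_1 by (pose proof (Rabs_pos M); lra). reflexivity. }
  pose proof (Rle_abs M).
  enough (Rpower (Rpower (Rabs M + 1) (/ d)) d <= Rpower x d) by lra.
  apply Rle_Rpower_l; [lra|]. split; [apply Rpower_pos|exact hx].
Qed.

Lemma is_series_finite_support (f : nat -> R) (N : nat) :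
  (forall k, (N < k)%nat -> f k = 0) -> is_series f (sum_f_R0 f N).
Proof.
  intros hf. change (is_lim_seq (sum_n f) (sum_f_R0 f N)).
  apply is_lim_seq_ext_loc with (fun _ => sum_f_R0 f N); [|apply is_lim_seq_const].
  exists N. intros n hn. rewrite sum_n_Reals.
  induction hn as [|n hn IH]; [reflexivity|].
  rewrite tech5, <- IH, hf by lia. ring.
Qed.

Lemma sum_le_Series (f : nat -> R) (N : nat) :
  (forall k, 0 <= f k) -> ex_series f -> sum_f_R0 f N <= Series f.
Proof.
  intros hf he. rewrite <- sum_n_Reals.
  apply is_lim_seq_incr_compare; [exact (Series_correct f he)|].
  intro n. rewrite !sum_n_Reals, tech5. specialize (hf (S n)). lra.
Qed.

Lemma ex_series_bounded_partial_sums (f : nat -> R) (M : R) :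
  (forall k, 0 <= f k) -> (forall N, sum_f_R0 f N <= M) ->
  ex_series f /\ Series f <= M.
Proof.
  intros hf hM.
  assert (hincr : forall n, sum_n f n <= sum_n f (S n)).
  { intro n. rewrite !sum_n_Reals, tech5. specialize (hf (S n)). lra. }
  assert (hM' : forall n, sum_n f n <= M) by (intro n; rewrite sum_n_Reals; apply hM).
  destruct (ex_finite_lim_seq_incr _ M hincr hM') as [l hl].
  split; [exists l; exact hl|].
  rewrite (is_series_unique f l hl).
  exact (is_lim_seq_le _ _ l M hM' hl (is_lim_seq_const M)).
Qed.

Lemma sum_le_telescoping (f F : nat -> R) (N : nat) :
  (forall k, (k < N)%nat -> f (S k) <= F (S k) - F k) ->
  sum_f_R0 f N <= f 0%nat + (F N - F 0%nat).
Proof.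
  induction N as [|N IH]; intro hstep; simpl; [lra|].
  specialize (IH (fun k hk => hstep k ltac:(lia))).
  specialize (hstep N ltac:(lia)). lra.
Qed.

Lemma abspow_nonneg (x q : R) : 0 <= abspow x q.
Proof.
  unfold abspow. destruct (Req_EM_T x 0); [lra|left; apply exp_pos].
Qed.

Lemma abspow_pos (x q : R) : 0 < x -> abspow x q = Rpower x q.
Proof.
  intros hx. unfold abspow. destruct (Req_EM_T x 0); [lra|]. now rewrite Rabs_pos_eq by lra.
Qed.

Lemma abspow_scale (t x q : R) : 0 < t -> abspow (t * x) q = Rpower t q * abspow x q.
Proof.
  intros ht. unfold abspow.
  destruct (Req_EM_T x 0) as [->|hx].
  - rewrite Rmult_0_r. destruct (Req_EM_T 0 0); [ring|contradiction].
  - destruct (Req_EM_T (t * x) 0) as [htx|_].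
    + exfalso. destruct (Rmult_integral _ _ htx); lra.
    + rewrite Rabs_mult, Rabs_pos_eq by lra.
      rewrite Rpower_mult_distr; [reflexivity|lra|apply Rabs_pos_lt, hx].
Qed.

Lemma young_abspow (p q x y : R) : 0 < p -> 0 < q -> / p + / q = 1 ->
  Rabs (x * y) <= abspow x p / p + abspow y q / q.
Proof.
  intros hp hq hpq.
  assert (0 <= abspow x p / p) by (apply Rdiv_le_0_compat; [apply abspow_nonneg|lra]).
  assert (0 <= abspow y q / q) by (apply Rdiv_le_0_compat; [apply abspow_nonneg|lra]).
  destruct (Req_EM_T x 0) as [->|hx]; [rewrite Rmult_0_l, Rabs_R0; lra|].
  destruct (Req_EM_T y 0) as [->|hy]; [rewrite Rmult_0_r, Rabs_R0; lra|].
  unfold abspow.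
  destruct (Req_EM_T x 0); [contradiction|]. destruct (Req_EM_T y 0); [contradiction|].
  assert (hip : 0 <= / p <= 1).
  { pose proof (Rinv_0_lt_compat p hp). pose proof (Rinv_0_lt_compat q hq). lra. }
  pose proof (exp_convex (/ p) (p * ln (Rabs x)) (q * ln (Rabs y)) hip) as hconv.
  replace (1 - / p) with (/ q) in hconv by lra.
  replace (/ p * (p * ln (Rabs x)) + / q * (q * ln (Rabs y)))
    with (ln (Rabs x) + ln (Rabs y)) in hconv by (field; lra).
  rewrite exp_plus, !exp_ln in hconv by (apply Rabs_pos_lt; assumption).
  rewrite Rabs_mult. unfold Rpower, Rdiv. lra.
Qed.

Lemma series_young (x y : nat -> R) (p q K t : R) :
  0 < p -> 0 < q -> / p + / q = 1 -> 0 < t ->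
  ex_series (fun k => abspow (x k) p) ->
  (forall N, sum_f_R0 (fun k => abspow (y k) q) N <= K) ->
  ex_series (fun k => x k * y k) /\
  Rabs (Series (fun k => x k * y k)) <=
    Rpower t p / p * Series (fun k => abspow (x k) p) + Rpower t (- q) / q * K.
Proof.
  intros hp hq hpq ht hx hy.
  assert (hterm : forall k, Rabs (x k * y k) <=
      abspow (x k) p * (Rpower t p / p) + abspow (y k) q * (Rpower t (- q) / q)).
  { intro k. replace (x k * y k) with ((t * x k) * (/ t * y k)) by (field; lra).
    eapply Rle_trans; [apply (young_abspow p q); assumption|].
    rewrite !abspow_scale by (try apply Rinv_0_lt_compat; lra).
    replace (Rpower (/ t) q) with (Rpower t (- q))
      by (unfold Rpower; rewrite ln_Rinv by lra; f_equal; ring).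
    right. unfold Rdiv. ring. }
  assert (hsum : forall N, sum_f_R0 (fun k => Rabs (x k * y k)) N <=
      Rpower t p / p * Series (fun k => abspow (x k) p) + Rpower t (- q) / q * K).
  { intro N. eapply Rle_trans; [apply sum_Rle; intros k _; apply hterm|].
    rewrite sum_plus, <- !scal_sum.
    apply Rplus_le_compat; apply Rmult_le_compat_l;
      try (apply Rdiv_le_0_compat; [left; apply Rpower_pos|assumption]).
    - exact (sum_le_Series _ N (fun k => abspow_nonneg (x k) p) hx).
    - exact (hy N). }
  destruct (ex_series_bounded_partial_sums _ _ (fun k => Rabs_pos _) hsum) as [habs hle].
  split; [exact (ex_series_Rabs _ habs)|].
  eapply Rle_trans; [exact (Series_Rabs _ habs)|exact hle].
Qed.

Lemma series_holder (x y : nat -> R) (p q K : R) :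
  0 < p -> 0 < q -> / p + / q = 1 ->
  ex_series (fun k => abspow (x k) p) ->
  (forall N, sum_f_R0 (fun k => abspow (y k) q) N <= K) ->
  ex_series (fun k => x k * y k) /\
  Rabs (Series (fun k => x k * y k)) <=
    (/ p + K / q) * Rpower (Series (fun k => abspow (x k) p)) (/ p).
Proof.
  intros hp hq hpq hx hy.
  pose proof (series_young x y p q K 1 hp hq hpq Rlt_0_1 hx hy) as [hex hb1].
  split; [exact hex|].
  set (A := Series (fun k => abspow (x k) p)) in *.
  assert (hA : 0 <= A).
  { unfold A. pose proof (sum_le_Series _ 0 (fun k => abspow_nonneg (x k) p) hx).
    pose proof (abspow_nonneg (x 0%nat) p). simpl in *. lra. }
  assert (hip : 0 < / p) by (apply Rinv_0_lt_compat; lra).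
  destruct (Req_dec A 0) as [hA0|hA0].
  - (* junk value: [Rpower 0 (/ p) = 1] since Stdlib's [ln 0] is [0] *)
    assert (hpow0 : Rpower A (/ p) = 1).
    { rewrite hA0. unfold Rpower, ln.
      destruct (Rlt_dec 0 0) as [h0|_]; [exfalso; exact (Rlt_irrefl 0 h0)|].
      rewrite Rmult_0_r. apply exp_0. }
    rewrite !Rpower_1_base, hA0 in hb1. rewrite hpow0. unfold Rdiv in *. lra.
  - (* choose the scale [t] that balances the two terms of Young's inequality *)
    set (t := Rpower A (- / (p * q))).
    pose proof (series_young x y p q K t hp hq hpq (Rpower_pos _ _) hx hy) as [_ hb].
    assert (e1 : Rpower t p * A = Rpower A (/ p)).
    { unfold t. rewrite Rpower_mult.
      transitivity (Rpower A (- / (p * q) * p) * Rpower A 1); [now rewrite Rpower_1 by lra|].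
      rewrite <- Rpower_plus. f_equal. replace (/ p) with (1 - / q) by lra. field. lra. }
    assert (e2 : Rpower t (- q) = Rpower A (/ p)).
    { unfold t. rewrite Rpower_mult. f_equal. field. lra. }
    fold A in hb. rewrite e2 in hb.
    replace (Rpower t p / p * A) with (/ p * (Rpower t p * A)) in hb by (unfold Rdiv; ring).
    rewrite e1 in hb. eapply Rle_trans; [exact hb|]. right. unfold Rdiv. ring.
Qed.

Lemma Rpower_one_minus_le (r x : R) : 0 < r -> 0 < x < 1 ->
  Rpower (1 - x) r <= 1 - Rmin r 1 * x.
Proof.
  intros hr hx. unfold Rpower.
  assert (hln : ln (1 - x) < 0) by (rewrite <- ln_1; apply ln_increasing; lra).
  destruct (Rle_dec r 1) as [hr1|hr1].
  - rewrite Rmin_left by lra.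
    pose proof (exp_convex r (ln (1 - x)) 0 (conj (Rlt_le _ _ hr) hr1)) as hconv.
    rewrite exp_ln, exp_0, Rmult_0_r, Rplus_0_r in hconv by lra. lra.
  - rewrite Rmin_right, Rmult_1_l by lra.
    rewrite <- (exp_ln (1 - x)) at 2 by lra.
    apply exp_le_compat. nra.
Qed.

Lemma Rpower_one_minus_opp_ge (r x : R) : 0 < r -> 0 < x < 1 ->
  1 + r * x <= Rpower (1 - x) (- r).
Proof.
  intros hr hx. unfold Rpower.
  assert (hln : ln (1 - x) <= - x).
  { pose proof (exp_ineq1_le (ln (1 - x))) as hexp. rewrite exp_ln in hexp by lra. lra. }
  pose proof (exp_ineq1_le (- r * ln (1 - x))). nra.
Qed.

Lemma Rpower_split_last (m r : R) : 1 < m ->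
  Rpower (m - 1) r = Rpower m r * Rpower (1 - / m) r.
Proof.
  intros hm. rewrite Rpower_mult_distr.
  - f_equal. field. lra.
  - lra.
  - assert (/ m < 1) by (rewrite <- Rinv_1; apply Rinv_lt_contravar; lra).
    lra.
Qed.

Lemma Rpower_increment_ge (r m : R) : 0 < r -> 1 < m ->
  Rmin r 1 * Rpower m (r - 1) <= Rpower m r - Rpower (m - 1) r.
Proof.
  intros hr hm.
  assert (hx : 0 < / m < 1).
  { split; [apply Rinv_0_lt_compat; lra|rewrite <- Rinv_1; apply Rinv_lt_contravar; lra]. }
  pose proof (Rpower_one_minus_le r (/ m) hr hx).
  assert (0 < Rpower m r) by apply exp_pos.
  rewrite Rpower_split_last, Rpower_minus, Rpower_1 by lra. unfold Rdiv. nra.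
Qed.

Lemma Rpower_decrement_ge (r m : R) : 0 < r -> 1 < m ->
  r * Rpower m (- r - 1) <= Rpower (m - 1) (- r) - Rpower m (- r).
Proof.
  intros hr hm.
  assert (hx : 0 < / m < 1).
  { split; [apply Rinv_0_lt_compat; lra|rewrite <- Rinv_1; apply Rinv_lt_contravar; lra]. }
  pose proof (Rpower_one_minus_opp_ge r (/ m) hr hx).
  assert (0 < Rpower m (- r)) by apply exp_pos.
  rewrite Rpower_split_last, Rpower_minus, Rpower_1 by lra. unfold Rdiv. nra.
Qed.

Lemma sum_Rpower_head_le (s : R) (n N : nat) : -1 < s ->
  sum_f_R0 (fun k => if (k <=? n)%nat then Rpower (INR (S k)) s else 0) N <=
  (1 + / Rmin (s + 1) 1) * Rpower (INR (S n)) (s + 1).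
Proof.
  intros hs. set (c := Rmin (s + 1) 1).
  assert (hc : 0 < c) by (apply Rmin_glb_lt; lra).
  set (F k := Rpower (INR (S (Nat.min k n))) (s + 1) / c).
  eapply Rle_trans; [apply (sum_le_telescoping _ F)|].
  - intros k _. unfold F.
    destruct (Nat.leb_spec (S k) n) as [hk|hk].
    + rewrite !Nat.min_l by lia.
      pose proof (Rpower_increment_ge (s + 1) (INR (S (S k))) ltac:(lra)) as hinc.
      rewrite INR_S_pred in hinc. replace (s + 1 - 1) with s in hinc by ring.
      pose proof (INR_S_ge_1 k). fold c in hinc.
      apply (Rmult_le_reg_l c); [exact hc|].
      replace (c * (_ / c - _ / c)) with
        (Rpower (INR (S (S k))) (s + 1) - Rpower (INR (S k)) (s + 1)) by (field; lra).
      apply hinc. rewrite S_INR. lra.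
    + rewrite !Nat.min_r by lia. lra.
  - cbv beta. replace (0 <=? n)%nat with true by (symmetry; apply Nat.leb_le; lia).
    change (INR 1) with 1. rewrite Rpower_1_base.
    assert (hmin : Rpower (INR (S (Nat.min N n))) (s + 1) <= Rpower (INR (S n)) (s + 1)).
    { apply Rle_Rpower_l; [lra|]. split; [apply lt_0_INR; lia|apply le_INR; lia]. }
    assert (h1 : 1 <= Rpower (INR (S n)) (s + 1)).
    { apply Rpower_ge_1; [apply INR_S_ge_1|lra]. }
    unfold F. rewrite Nat.min_0_l. change (INR 1) with 1. rewrite Rpower_1_base.
    assert (0 < / c) by (apply Rinv_0_lt_compat, hc).
    unfold Rdiv. nra.
Qed.

Lemma sum_Rpower_tail_le (r : R) (n N : nat) : 0 < r ->
  sum_f_R0 (fun k => if (n <? k)%nat then Rpower (INR (S k)) (- r - 1) else 0) N <=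
  Rpower (INR (S n)) (- r) / r.
Proof.
  intros hr.
  set (F k := - Rpower (INR (S (Nat.max k n))) (- r) / r).
  eapply Rle_trans; [apply (sum_le_telescoping _ F)|].
  - intros k _. unfold F.
    destruct (Nat.ltb_spec n (S k)) as [hk|hk].
    + rewrite Nat.max_l, Nat.max_l by lia.
      pose proof (Rpower_decrement_ge r (INR (S (S k))) hr) as hdec.
      rewrite INR_S_pred in hdec. pose proof (INR_S_ge_1 k).
      apply (Rmult_le_reg_l r); [exact hr|].
      replace (r * (_ / r - _ / r)) with
        (Rpower (INR (S k)) (- r) - Rpower (INR (S (S k))) (- r)) by (field; lra).
      apply hdec. rewrite S_INR. lra.
    + rewrite !Nat.max_r by lia. lra.
  - cbv beta. replace (n <? 0)%nat with false by (symmetry; apply Nat.ltb_ge; lia).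
    unfold F. rewrite Nat.max_0_l.
    pose proof (Rpower_pos (INR (S (Nat.max N n))) (- r)).
    assert (0 < / r) by (apply Rinv_0_lt_compat, hr).
    unfold Rdiv. nra.
Qed.

Definition hilbert_kernel (lam mu nu : R) (n k : nat) : R :=
  Rpower (INR (S k)) mu * Rpower (INR (S n)) nu / Rpower (INR (S k) + INR (S n)) lam.

Lemma hilbert_kernel_le (lam mu nu : R) (n k : nat) : 0 <= lam ->
  hilbert_kernel lam mu nu n k <=
    (if (k <=? n)%nat then Rpower (INR (S k)) mu else 0) * Rpower (INR (S n)) (nu - lam) +
    (if (n <? k)%nat then Rpower (INR (S k)) (mu - lam) else 0) * Rpower (INR (S n)) nu.
Proof.
  intros hlam. unfold hilbert_kernel. rewrite !Rpower_minus.
  pose proof (INR_S_ge_1 k). pose proof (INR_S_ge_1 n).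
  pose proof (Rpower_pos (INR (S k)) mu). pose proof (Rpower_pos (INR (S n)) nu).
  (* [(m + n)^lam] dominates both [m^lam] and [n^lam] *)
  destruct (Nat.leb_spec k n) as [hk|hk];
    [replace (n <? k)%nat with false by (symmetry; apply Nat.ltb_ge; lia)
    |replace (n <? k)%nat with true by (symmetry; apply Nat.ltb_lt; lia)];
    rewrite Rmult_0_l; [rewrite Rplus_0_r|rewrite Rplus_0_l]; unfold Rdiv.
  - replace (_ * (_ * / _)) with
      (Rpower (INR (S k)) mu * Rpower (INR (S n)) nu * / Rpower (INR (S n)) lam) by ring.
    apply Rmult_le_compat_l; [nra|]. apply Rinv_le_contravar; [apply Rpower_pos|].
    apply Rle_Rpower_l; [exact hlam|]. apply le_INR in hk. lra.
  - replace (_ * / _ * _) with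
      (Rpower (INR (S k)) mu * Rpower (INR (S n)) nu * / Rpower (INR (S k)) lam) by ring.
    apply Rmult_le_compat_l; [nra|]. apply Rinv_le_contravar; [apply Rpower_pos|].
    apply Rle_Rpower_l; [exact hlam|]. lra.
Qed.

Lemma hilbert_kernel_sum_bounded (lam mu nu : R) :
  -1 < mu -> mu - lam < -1 -> mu + nu + 1 - lam <= 0 ->
  exists K, forall n N, sum_f_R0 (hilbert_kernel lam mu nu n) N <= K.
Proof.
  intros hmu hlam hexp.
  set (r := lam - mu - 1). set (C := 1 + / Rmin (mu + 1) 1).
  exists (C + / r). intros n N. set (nn := INR (S n)).
  eapply Rle_trans; [apply sum_Rle; intros k _; apply hilbert_kernel_le; lra|].
  rewrite sum_plus, <- !scal_sum.
  replace (mu - lam) with (- r - 1) by (unfold r; ring).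
  pose proof (sum_Rpower_head_le mu n N hmu) as hhead.
  pose proof (sum_Rpower_tail_le r n N ltac:(unfold r; lra)) as htail.
  fold C nn in hhead, htail |- *.
  assert (hE : Rpower nn (mu + nu + 1 - lam) <= 1)
    by (apply Rpower_le_1; [apply INR_S_ge_1|exact hexp]).
  assert (e1 : Rpower nn (nu - lam) * Rpower nn (mu + 1) = Rpower nn (mu + nu + 1 - lam))
    by (rewrite <- Rpower_plus; f_equal; ring).
  assert (e2 : Rpower nn nu * Rpower nn (- r) = Rpower nn (mu + nu + 1 - lam))
    by (rewrite <- Rpower_plus; f_equal; unfold r; ring).
  pose proof (Rpower_pos nn (nu - lam)). pose proof (Rpower_pos nn nu).
  assert (hC : 0 <= C).
  { assert (hmin : 0 < Rmin (mu + 1) 1) by (apply Rmin_glb_lt; lra).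
    pose proof (Rinv_0_lt_compat _ hmin). unfold C. lra. }
  assert (hr : 0 < / r) by (apply Rinv_0_lt_compat; unfold r; lra).
  apply Rplus_le_compat.
  - eapply Rle_trans; [apply Rmult_le_compat_l; [lra|exact hhead]|].
    rewrite (Rmult_comm C), <- Rmult_assoc, e1. nra.
  - eapply Rle_trans; [apply Rmult_le_compat_l; [lra|exact htail]|].
    unfold Rdiv. rewrite <- Rmult_assoc, e2. nra.
Qed.

Lemma hilbert_kernel_ge (lam mu nu : R) (n k : nat) : (n <= k)%nat ->
  Rpower 2 (- Rabs lam) * Rpower (INR (S k)) (mu - lam) * Rpower (INR (S n)) nu <=
  hilbert_kernel lam mu nu n k.
Proof.
  intros hk. unfold hilbert_kernel, Rdiv.
  pose proof (INR_S_ge_1 k). pose proof (INR_S_ge_1 n).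
  assert (hnk : INR (S n) <= INR (S k)) by (apply le_INR; lia).
  assert (hcmp : Rpower 2 (- Rabs lam) * Rpower (INR (S k)) (- lam) <=
                 Rpower (INR (S k) + INR (S n)) (- lam)).
  { rewrite <- (Rabs_Ropp lam). apply Rpower_comparable; lra. }
  rewrite <- Rpower_Ropp. unfold Rminus. rewrite Rpower_plus.
  pose proof (Rpower_pos (INR (S k)) mu). pose proof (Rpower_pos (INR (S n)) nu).
  replace (Rpower 2 (- Rabs lam) * (Rpower (INR (S k)) mu * Rpower (INR (S k)) (- lam)) *
           Rpower (INR (S n)) nu)
    with (Rpower (INR (S k)) mu * Rpower (INR (S n)) nu *
          (Rpower 2 (- Rabs lam) * Rpower (INR (S k)) (- lam))) by ring.
  apply Rmult_le_compat_l; [nra|exact hcmp].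
Qed.

Lemma H_term_factor (p alpha lam mu nu : R) (a : nat -> R) (n k : nat) :
  H_term lam mu nu a n k =
  (Rpower (INR (S k)) (alpha / p) * a k) * hilbert_kernel lam (mu - alpha / p) nu n k.
Proof.
  unfold H_term, hilbert_kernel. rewrite Rpower_minus.
  pose proof (Rpower_pos (INR (S k)) (alpha / p)).
  pose proof (Rpower_pos (INR (S k) + INR (S n)) lam).
  field. lra.
Qed.

Lemma abspow_lpa_weight (p alpha : R) (a : nat -> R) (k : nat) : p <> 0 ->
  abspow (Rpower (INR (S k)) (alpha / p) * a k) p = lpa_term p alpha a k.
Proof.
  intros hp. rewrite abspow_scale by apply Rpower_pos.
  unfold lpa_term. rewrite Rpower_mult. do 2 f_equal. field. exact hp.
Qed.

Lemma abspow_hilbert_kernel (lam mu nu q : R) (n k : nat) :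
  abspow (hilbert_kernel lam mu nu n k) q = hilbert_kernel (q * lam) (q * mu) (q * nu) n k.
Proof.
  assert (hpos : 0 < hilbert_kernel lam mu nu n k).
  { unfold hilbert_kernel, Rdiv.
    repeat apply Rmult_lt_0_compat; try apply Rinv_0_lt_compat; apply Rpower_pos. }
  rewrite abspow_pos by exact hpos. unfold hilbert_kernel, Rpower, Rdiv.
  rewrite !ln_mult, ln_Rinv, !ln_exp
    by (repeat apply Rmult_lt_0_compat; try apply Rinv_0_lt_compat; apply exp_pos).
  rewrite <- exp_Ropp, <- !exp_plus. f_equal. ring.
Qed.

Lemma H_bounded_of_exponents (p alpha lam mu nu : R) :
  1 < p -> alpha + 1 < p * (mu + 1) ->
  lam >= mu + nu + 1 - (alpha + 1) / p -> p * (mu + 1 - lam) < alpha + 1 ->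
  H_bounded_lpa_linf p alpha lam mu nu.
Proof.
  intros hp hmu hlam hsum.
  set (q := p / (p - 1)). set (s := mu - alpha / p).
  assert (hq : 0 < q) by (apply Rdiv_lt_0_compat; lra).
  assert (hpq : / p + / q = 1) by (unfold q; field; lra).
  assert (hlam' : p * (mu + nu + 1 - lam) <= alpha + 1).
  { replace (alpha + 1) with (p * ((alpha + 1) / p)) by (field; lra).
    apply Rmult_le_compat_l; lra. }
  (* multiplying by [p - 1 > 0] turns the three kernel conditions into the hypotheses *)
  assert (e1 : (q * s + 1) * (p - 1) = p * (mu + 1) - (alpha + 1))
    by (unfold q, s; field; lra).
  assert (e2 : (q * s - q * lam + 1) * (p - 1) = p * (mu + 1 - lam) - (alpha + 1))
    by (unfold q, s; field; lra).
  assert (e3 : (q * s + q * nu + 1 - q * lam) * (p - 1) =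
               p * (mu + nu + 1 - lam) - (alpha + 1))
    by (unfold q, s; field; lra).
  destruct (hilbert_kernel_sum_bounded (q * lam) (q * s) (q * nu)) as [K hK];
    [nra|nra|nra|].
  exists (/ p + K / q). intros a ha n.
  destruct (series_holder (fun k => Rpower (INR (S k)) (alpha / p) * a k)
              (hilbert_kernel lam s nu n) p q K) as [hex hle]; [lra|exact hq|exact hpq| | |].
  - apply (ex_series_ext (lpa_term p alpha a)); [|exact ha].
    intro k. symmetry. apply abspow_lpa_weight. lra.
  - intro N. rewrite (sum_eq _ (hilbert_kernel (q * lam) (q * s) (q * nu) n))
      by (intros; apply abspow_hilbert_kernel).
    apply hK.
  - rewrite (Series_ext (fun k => abspow (Rpower (INR (S k)) (alpha / p) * a k) p)
                        (lpa_term p alpha a)) in hle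
      by (intro k; apply abspow_lpa_weight; lra).
    split.
    + eapply ex_series_ext; [|exact hex]. intro k. symmetry. apply H_term_factor.
    + unfold H_op, lpa_norm.
      rewrite (Series_ext _ _ (H_term_factor p alpha lam mu nu a n)). exact hle.
Qed.

Lemma lpa_term_0 (p alpha : R) (a : nat -> R) (k : nat) : a k = 0 -> lpa_term p alpha a k = 0.
Proof.
  intros ha. unfold lpa_term, abspow. rewrite ha. destruct (Req_EM_T 0 0); [ring|contradiction].
Qed.

Lemma H_term_0 (lam mu nu : R) (a : nat -> R) (n k : nat) : a k = 0 -> H_term lam mu nu a n k = 0.
Proof. intros ha. unfold H_term. rewrite ha. ring. Qed.

Lemma H_bounded_finite_support (p alpha lam mu nu : R) :
  H_bounded_lpa_linf p alpha lam mu nu ->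
  exists C, forall (a : nat -> R) (N n : nat), (forall k, (N < k)%nat -> a k = 0) ->
    Rabs (sum_f_R0 (H_term lam mu nu a n) N) <=
    C * Rpower (sum_f_R0 (lpa_term p alpha a) N) (/ p).
Proof.
  intros [C hC]. exists C. intros a N n ha.
  assert (hl : is_series (lpa_term p alpha a) (sum_f_R0 (lpa_term p alpha a) N))
    by (apply is_series_finite_support; intros k hk; apply lpa_term_0, ha, hk).
  assert (hh : is_series (H_term lam mu nu a n) (sum_f_R0 (H_term lam mu nu a n) N))
    by (apply is_series_finite_support; intros k hk; apply H_term_0, ha, hk).
  destruct (hC a (ex_intro _ _ hl) n) as [_ hb].
  unfold H_op, lpa_norm in hb.
  now rewrite (is_series_unique _ _ hh), (is_series_unique _ _ hl) in hb.
Qed.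

Definition in_block (lo hi k : nat) : bool := Nat.leb lo k && Nat.leb k hi.

Definition power_block (g : R) (lo hi k : nat) : R :=
  if in_block lo hi k then Rpower (INR (S k)) (- g) else 0.

Lemma power_block_support (g : R) (lo hi k : nat) : (hi < k)%nat -> power_block g lo hi k = 0.
Proof.
  intros hk. unfold power_block, in_block.
  replace (k <=? hi)%nat with false by (symmetry; apply Nat.leb_gt, hk).
  now rewrite andb_false_r.
Qed.

Lemma lpa_term_power_block (p alpha : R) (lo hi k : nat) : 0 < p ->
  lpa_term p alpha (power_block ((alpha + 1) / p) lo hi) k =
  if in_block lo hi k then / INR (S k) else 0.
Proof.
  intros hp. destruct (in_block lo hi k) eqn:hk;
    [|apply lpa_term_0; unfold power_block; now rewrite hk].
  unfold lpa_term, power_block.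
  rewrite hk, abspow_pos, Rpower_mult, <- Rpower_plus by apply Rpower_pos.
  replace (alpha + - ((alpha + 1) / p) * p) with (- (1)) by (field; lra).
  rewrite Rpower_Ropp, Rpower_1 by (apply lt_0_INR; lia). reflexivity.
Qed.

Lemma H_term_power_block (lam mu nu g : R) (lo hi n k : nat) :
  H_term lam mu nu (power_block g lo hi) n k =
  if in_block lo hi k then hilbert_kernel lam (mu - g) nu n k else 0.
Proof.
  unfold H_term, power_block, hilbert_kernel.
  destruct (in_block lo hi k); [|ring].
  rewrite Rpower_minus, Rpower_Ropp.
  pose proof (Rpower_pos (INR (S k)) g).
  pose proof (Rpower_pos (INR (S k) + INR (S n)) lam).
  field. lra.
Qed.

Lemma sum_block_const (lo hi : nat) (b : R) :
  sum_f_R0 (fun k => if in_block lo hi k then b else 0) hi =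
  INR (S hi - lo) * b.
Proof.
  enough (hN : forall N, (N <= hi)%nat ->
    sum_f_R0 (fun k => if in_block lo hi k then b else 0) N =
    INR (S N - lo) * b) by (apply hN; lia).
  unfold in_block. induction N as [|N IH]; intros hN.
  - simpl. replace (0 <=? hi)%nat with true by (symmetry; apply Nat.leb_le; lia).
    destruct lo; simpl; ring.
  - rewrite tech5, IH by lia.
    replace (S N <=? hi)%nat with true by (symmetry; apply Nat.leb_le; lia).
    rewrite andb_true_r.
    destruct (Nat.leb_spec lo (S N)) as [hlo|hlo].
    + replace (S (S N) - lo)%nat with (S (S N - lo)) by lia. rewrite S_INR. ring.
    + replace (S (S N) - lo)%nat with 0%nat by lia.
      replace (S N - lo)%nat with 0%nat by lia. simpl. ring.
Qed.

Lemma sum_block_le (f : nat -> R) (lo hi : nat) (b : R) :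
  (forall k, (lo <= k <= hi)%nat -> f k <= b) ->
  sum_f_R0 (fun k => if in_block lo hi k then f k else 0) hi <=
  INR (S hi - lo) * b.
Proof.
  intros hf. rewrite <- sum_block_const. apply sum_Rle. intros k _. unfold in_block.
  destruct (Nat.leb_spec lo k), (Nat.leb_spec k hi); simpl; [apply hf; lia|lra..].
Qed.

Lemma sum_block_ge (f : nat -> R) (lo hi : nat) (b : R) :
  (forall k, (lo <= k <= hi)%nat -> b <= f k) ->
  INR (S hi - lo) * b <=
  sum_f_R0 (fun k => if in_block lo hi k then f k else 0) hi.
Proof.
  intros hf. rewrite <- sum_block_const. apply sum_Rle. intros k _. unfold in_block.
  destruct (Nat.leb_spec lo k), (Nat.leb_spec k hi); simpl; [apply hf; lia|lra..].
Qed.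

Lemma harmonic_exp_ge (N : nat) : INR (S (S N)) <= exp (sum_f_R0 (fun k => / INR (S k)) N).
Proof.
  induction N as [|N IH].
  - simpl. replace (/ 1) with 1 by field. pose proof (exp_ineq1_le 1). lra.
  - rewrite tech5, exp_plus.
    pose proof (exp_ineq1_le (/ INR (S (S N)))).
    assert (hpos : 0 < INR (S (S N))) by (apply lt_0_INR; lia).
    replace (INR (S (S (S N)))) with (INR (S (S N)) * (1 + / INR (S (S N))))
      by (rewrite (S_INR (S (S N))); field; lra).
    pose proof (Rinv_0_lt_compat _ hpos).
    apply Rmult_le_compat; lra.
Qed.

Lemma harmonic_unbounded (M : R) : exists N, M < sum_f_R0 (fun k => / INR (S k)) N.
Proof.
  destruct (INR_unbounded (exp M)) as [N hN]. exists N.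
  apply exp_lt_inv. eapply Rlt_le_trans; [|apply harmonic_exp_ge].
  assert (INR N <= INR (S (S N))) by (apply le_INR; lia). lra.
Qed.

Lemma lpa_sum_initial_block (p alpha : R) (N : nat) : 0 < p ->
  sum_f_R0 (lpa_term p alpha (power_block ((alpha + 1) / p) 0 N)) N =
  sum_f_R0 (fun k => / INR (S k)) N.
Proof.
  intros hp. apply sum_eq. intros k hk. rewrite lpa_term_power_block by exact hp.
  unfold in_block. now replace (k <=? N)%nat with true by (symmetry; apply Nat.leb_le, hk).
Qed.

Lemma H_sum_initial_block_ge (lam mu nu g : R) (N : nat) : -1 <= mu - g - lam ->
  Rpower 2 (- Rabs lam) * sum_f_R0 (fun k => / INR (S k)) N <=
  sum_f_R0 (H_term lam mu nu (power_block g 0 N) 0) N.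
Proof.
  intros hexp. rewrite scal_sum. apply sum_Rle. intros k hk.
  rewrite H_term_power_block. unfold in_block.
  replace (k <=? N)%nat with true by (symmetry; apply Nat.leb_le, hk). simpl andb.
  assert (hinv : / INR (S k) <= Rpower (INR (S k)) (mu - g - lam)).
  { rewrite <- (Rpower_1 (INR (S k))) at 1 by (apply lt_0_INR; lia).
    rewrite <- Rpower_Ropp. apply Rle_Rpower; [apply INR_S_ge_1|lra]. }
  eapply Rle_trans; [|apply hilbert_kernel_ge; lia].
  change (INR 1) with 1. rewrite Rpower_1_base, Rmult_1_r, Rmult_comm.
  apply Rmult_le_compat_l; [left; apply Rpower_pos|exact hinv].
Qed.

Lemma H_bounded_exponent_lt (p alpha lam mu nu : R) : 1 < p ->
  H_bounded_lpa_linf p alpha lam mu nu -> p * (mu + 1 - lam) < alpha + 1.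
Proof.
  intros hp hb. destruct (H_bounded_finite_support _ _ _ _ _ hb) as [C hC].
  destruct (Rlt_le_dec (p * (mu + 1 - lam)) (alpha + 1)) as [h|h]; [exact h|exfalso].
  set (g := (alpha + 1) / p). set (c := Rpower 2 (- Rabs lam)).
  assert (hg : -1 <= mu - g - lam).
  { enough (g <= mu + 1 - lam) by lra.
    apply (Rmult_le_reg_l p); [lra|].
    unfold g. replace (p * ((alpha + 1) / p)) with (alpha + 1) by (field; lra). lra. }
  assert (hip : / p < 1) by (rewrite <- Rinv_1; apply Rinv_lt_contravar; lra).
  destruct (Rpower_unbounded (1 - / p) (C / c)) as [Y hY]; [lra|].
  destruct (harmonic_unbounded Y) as [N hN].
  set (HN := sum_f_R0 (fun k => / INR (S k)) N) in hN.
  (* at [n = 1], the test sequence [a_m = m^(-g)], [m <= N + 1], has [||a||^p = HN] *)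
  specialize (hC (power_block g 0 N) N 0%nat (power_block_support g 0 N)).
  rewrite lpa_sum_initial_block in hC by lra.
  pose proof (H_sum_initial_block_ge lam mu nu g N hg) as hlow.
  fold HN in hC, hlow. fold c in hlow.
  pose proof (Rle_abs (sum_f_R0 (H_term lam mu nu (power_block g 0 N) 0) N)).
  assert (hHN : 0 < HN) by (apply tech1; intros; apply Rinv_0_lt_compat; apply lt_0_INR; lia).
  assert (hsplit : HN = Rpower HN (1 - / p) * Rpower HN (/ p)).
  { rewrite <- Rpower_plus. replace (1 - / p + / p) with 1 by ring.
    now rewrite Rpower_1 by exact hHN. }
  pose proof (Rpower_pos HN (/ p)). assert (hc : 0 < c) by apply Rpower_pos.
  assert (c * Rpower HN (1 - / p) <= C).
  { apply (Rmult_le_reg_r (Rpower HN (/ p))); [assumption|].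
    rewrite Rmult_assoc, <- hsplit. lra. }
  specialize (hY HN (Rlt_le _ _ hN)).
  apply (Rmult_lt_compat_r c) in hY; [|assumption].
  unfold Rdiv in hY. rewrite Rmult_assoc, Rinv_l, Rmult_1_r in hY by lra. lra.
Qed.

Lemma INR_dyadic_block (n k : nat) : (S n <= k <= n + S n)%nat ->
  INR (S n) <= INR (S k) <= 2 * INR (S n).
Proof.
  intros hk. split; [apply le_INR; lia|].
  replace (2 * INR (S n)) with (INR (S n + S n)) by (rewrite plus_INR; ring).
  apply le_INR; lia.
Qed.

Lemma dyadic_block_length (n : nat) : INR (S (n + S n) - S n) = INR (S n).
Proof. f_equal. lia. Qed.

Lemma lpa_sum_dyadic_block (p alpha : R) (n : nat) : 0 < p ->
  0 < sum_f_R0 (lpa_term p alpha (power_block ((alpha + 1) / p) (S n) (n + S n))) (n + S n) <= 1.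
Proof.
  intros hp. pose proof (INR_S_ge_1 n).
  erewrite sum_eq by (intros k _; rewrite lpa_term_power_block by exact hp; reflexivity).
  split.
  - eapply Rlt_le_trans; [|apply (sum_block_ge _ _ _ (/ (2 * INR (S n))))].
    + rewrite dyadic_block_length.
      replace (INR (S n) * / (2 * INR (S n))) with (/ 2) by (field; lra). lra.
    + intros k hk. pose proof (INR_dyadic_block n k hk). apply Rinv_le_contravar; lra.
  - eapply Rle_trans; [apply (sum_block_le _ _ _ (/ INR (S n)))|].
    + intros k hk. pose proof (INR_dyadic_block n k hk). apply Rinv_le_contravar; lra.
    + rewrite dyadic_block_length. right. field. lra.
Qed.

Lemma H_sum_dyadic_block_ge (lam mu nu g : R) (n : nat) :
  Rpower 2 (- Rabs lam) * Rpower 2 (- Rabs (mu - g - lam)) *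
    Rpower (INR (S n)) (mu + nu + 1 - lam - g) <=
  sum_f_R0 (H_term lam mu nu (power_block g (S n) (n + S n)) n) (n + S n).
Proof.
  set (nn := INR (S n)). pose proof (INR_S_ge_1 n) as hnn. fold nn in hnn.
  set (c := Rpower 2 (- Rabs lam) * Rpower 2 (- Rabs (mu - g - lam))).
  erewrite sum_eq by (intros k _; rewrite H_term_power_block; reflexivity).
  eapply Rle_trans; [|apply (sum_block_ge _ _ _ (c * Rpower nn (mu - g - lam + nu)))].
  - rewrite dyadic_block_length. fold nn.
    replace (mu + nu + 1 - lam - g) with ((mu - g - lam + nu) + 1) by ring.
    rewrite Rpower_plus, Rpower_1 by lra. right. ring.
  - intros k hk. eapply Rle_trans; [|apply hilbert_kernel_ge; lia].
    pose proof (Rpower_comparable nn (INR (S k)) 2 (mu - g - lam) ltac:(lra) ltac:(lra)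
                  (INR_dyadic_block n k hk)) as hcmp.
    rewrite Rpower_plus. fold nn.
    pose proof (Rpower_pos 2 (- Rabs lam)). pose proof (Rpower_pos nn nu).
    apply (Rmult_le_compat_l (Rpower 2 (- Rabs lam) * Rpower nn nu)) in hcmp; [|nra].
    unfold c. nra.
Qed.

Lemma H_bounded_lam_ge (p alpha lam mu nu : R) : 1 < p ->
  H_bounded_lpa_linf p alpha lam mu nu -> lam >= mu + nu + 1 - (alpha + 1) / p.
Proof.
  intros hp hb. destruct (H_bounded_finite_support _ _ _ _ _ hb) as [C hC].
  destruct (Rge_dec lam (mu + nu + 1 - (alpha + 1) / p)) as [h|h]; [exact h|exfalso].
  set (g := (alpha + 1) / p). set (E := mu + nu + 1 - lam - g).
  set (c := Rpower 2 (- Rabs lam) * Rpower 2 (- Rabs (mu - g - lam))).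
  assert (hc : 0 < c) by (apply Rmult_lt_0_compat; apply Rpower_pos).
  destruct (Rpower_unbounded E (C / c)) as [Y hY]; [unfold E, g; lra|].
  destruct (INR_unbounded Y) as [n hn].
  (* test on the block [n + 1 < m <= 2 (n + 1)] of [n + 1] terms, where [||a|| <= 1]
     while [H a (n + 1)] grows like [(n + 1)^E] *)
  specialize (hC (power_block g (S n) (n + S n)) (n + S n)%nat n (power_block_support g _ _)).
  pose proof (lpa_sum_dyadic_block p alpha n ltac:(lra)) as hnorm. fold g in hnorm.
  set (A := sum_f_R0 (lpa_term p alpha (power_block g (S n) (n + S n))) (n + S n)) in *.
  assert (hR : Rpower A (/ p) <= 1).
  { rewrite <- (Rpower_1_base (/ p)).
    apply Rle_Rpower_l; [left; apply Rinv_0_lt_compat; lra|lra]. }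
  pose proof (Rpower_pos A (/ p)).
  pose proof (H_sum_dyadic_block_ge lam mu nu g n) as hlow. fold c E in hlow.
  pose proof (Rle_abs (sum_f_R0 (H_term lam mu nu (power_block g (S n) (n + S n)) n) (n + S n))).
  specialize (hY (INR (S n)) ltac:(rewrite S_INR; lra)).
  apply (Rmult_lt_compat_r c) in hY; [|assumption].
  unfold Rdiv in hY. rewrite Rmult_assoc, Rinv_l, Rmult_1_r in hY by lra.
  pose proof (Rpower_pos (INR (S n)) E).
  destruct (Rle_lt_dec C 0); nra.
Qed.

Theorem theorem1p8 (p lam mu nu alpha : R) :
  1 < p -> alpha + 1 < p * (mu + 1) ->
  (H_bounded_lpa_linf p alpha lam mu nu <->
   (lam >= mu + nu + 1 - (alpha + 1) / p /\ p * (mu + 1 - lam) < alpha + 1)).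
Proof.
  intros hp hmu. split.
  - intros hb. split.
    + exact (H_bounded_lam_ge p alpha lam mu nu hp hb).
    + exact (H_bounded_exponent_lt p alpha lam mu nu hp hb).
  - intros [hlam hsum]. exact (H_bounded_of_exponents p alpha lam mu nu hp hmu hlam hsum).
Qed.
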